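(* The set $G^*\operatorname{cone}\big(\mathbb{R}^m_- -(G\bar u-b)\big)^\circ$ is a weakly-$*$ closed subset of $L^\infty(\Lambda)^*$.
   Context: Let $\Lambda\subset\mathbb{R}^d$ be bounded and Lebesgue measurable, $f:L^2(\Lambda)\to\mathbb{R}$ continuously Fréchet differentiable, $G:L^2(\Lambda)\to\mathbb{R}^m$ linear and bounded, $b\in\mathbb{R}^m$, $u_a,u_b\in L^\infty(\Lambda)$ with $u_a+\delta\le u_b$ a.e. for some $\delta>0$. Consider the problem: minimize $f(u)$ subject to $u_a\le u\le u_b$ a.e. in $\Lambda$ and $Gu\le b$. Assume there is $\hat u\in L^\infty(\Lambda)$ with $G\hat u\le b$ and $u_a+\rho\le\hat u\le u_b-\rho$ a.e. for some $\rho>0$. Let $\bar u\in L^\infty(\Lambda)$ be a locally optimal solution of this problem. $G$ is also regarded as a map on $L^\infty(\Lambda)\hookrightarrow L^2(\Lambda)$, with adjoint $G^*:\mathbb{R}^m\to L^\infty(\Lambda)^*$. $\mathbb{R}^m_-:=\{v\in\mathbb{R}^m:v\le0\}$, $\operatorname{cone}$ denotes the conic hull, and $K^\circ:=\{w\in\mathbb{R}^m: w^\top v\le 0\ \forall v\in K\}$ the polar cone. *)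

From HB Require Import structures.
From mathcomp Require Import all_boot all_order all_algebra.
From mathcomp Require Import all_classical all_reals all_analysis.
Set Implicit Arguments. Unset Strict Implicit. Unset Printing Implicit Defensive.
Import Order.TTheory GRing.Theory Num.Theory.
Local Open Scope classical_set_scope.
Local Open Scope ring_scope.

Section Defs.
Context {dT : measure_display} {T : measurableType dT} {R : realType}.
Variables (mu : {measure set T -> \bar R}) (L : set T).

Definition Linf (u : T -> R) : Prop :=
  measurable_fun L u /\ exists C : R, {ae mu, forall x, L x -> `|u x| <= C}.

Definition ess_bounded_by (u : T -> R) (M : R) : Prop :=
  {ae mu, forall x, L x -> `|u x| <= M}.

Definition L2 (u : T -> R) : Prop :=
  measurable_fun L u /\ (\int[mu]_(x in L) ((u x) ^+ 2)%:E < +oo)%E.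

Definition L2norm (u : T -> R) : R :=
  Num.sqrt (fine (\int[mu]_(x in L) ((u x) ^+ 2)%:E)).


(* elements of the dual L^infty(L)^*, represented by their action on
   representatives of L^infty(L): linear, well defined on a.e.-classes,
   bounded w.r.t. the essential sup norm. Only values on Linf matter. *)
Definition Linf_dual (phi : (T -> R) -> R) : Prop :=
  [/\ (forall u v, Linf u -> Linf v -> ae_eq mu L u v -> phi u = phi v),
      (forall (a : R) u v, Linf u -> Linf v -> phi (fun x => a * u x + v x) = a * phi u + phi v)
    & exists C : R, forall u M, Linf u -> ess_bounded_by u M -> `|phi u| <= C * M].

(* weak-* closedness of a set S of elements of L^infty(L)^* (S is assumed to
   be a union of classes of functionals agreeing on L^infty): every point of
   the dual outside S has a basic weak-* neighbourhood disjoint from S *)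
Definition weak_star_closed (S : set ((T -> R) -> R)) : Prop :=
  forall phi, Linf_dual phi -> ~ S phi ->
    exists (vs : seq (T -> R)) (e : R), 0 < e /\ (forall v, v \in vs -> Linf v) /\
      forall psi, Linf_dual psi ->
        (forall v, v \in vs -> `|psi v - phi v| < e) -> ~ S psi.

Definition C1_L2 (f : (T -> R) -> R) : Prop :=
  exists Df : (T -> R) -> (T -> R) -> R,
  [/\ (forall u, L2 u ->
        (forall (a : R) h k, L2 h -> L2 k -> Df u (fun x => a * h x + k x) = a * Df u h + Df u k)
        /\ exists C : R, forall h, L2 h -> `|Df u h| <= C * L2norm h),
      (forall u, L2 u -> forall e : R, 0 < e -> exists2 d : R, 0 < d &
         forall h, L2 h -> L2norm h < d ->
           `|f (fun x => u x + h x) - f u - Df u h| <= e * L2norm h)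
    & (forall u, L2 u -> forall e : R, 0 < e -> exists2 d : R, 0 < d &
         forall v, L2 v -> L2norm (fun x => v x - u x) < d ->
           forall h, L2 h -> `|Df v h - Df u h| <= e * L2norm h)].
End Defs.

(* finite-dimensional part: R^m is 'I_m -> R, ordered componentwise *)
Definition vdot {R : realType} {m : nat} (w v : 'I_m -> R) : R := \sum_(i < m) w i * v i.

Definition cone {R : realType} {m : nat} (A : set ('I_m -> R)) : set ('I_m -> R) :=
  [set v | exists (n : nat) (t : 'I_n -> R) (a : 'I_n -> 'I_m -> R),
     [/\ forall k, 0 <= t k, forall k, A (a k) & v = fun i => \sum_(k < n) t k * a k i]].

Definition polar {R : realType} {m : nat} (K : set ('I_m -> R)) : set ('I_m -> R) :=
  [set w | forall v, K v -> vdot w v <= 0].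

Definition nonpos_minus {R : realType} {m : nat} (c : 'I_m -> R) : set ('I_m -> R) :=
  [set z | exists2 v : 'I_m -> R, (forall i, v i <= 0) & z = fun i => v i - c i].

Definition Gstar {T : Type} {R : realType} {m : nat} (G : (T -> R) -> 'I_m -> R)
  (w : 'I_m -> R) : (T -> R) -> R := fun v => vdot w (G v).

(* the image G^* K as a set of elements of L^infty(L)^*: functionals that
   coincide on L^infty(L) with G^* w for some w in K *)
Definition Gstar_image {dT : measure_display} {T : measurableType dT} {R : realType}
  (mu : {measure set T -> \bar R}) (L : set T) {m : nat}
  (G : (T -> R) -> 'I_m -> R) (K : set ('I_m -> R)) : set ((T -> R) -> R) :=
  [set phi | exists2 w, K w & forall v, Linf mu L v -> phi v = Gstar G w v].

(* By the description of its polar, the set is the cone generated by the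
   finitely many functionals v |-> (G v)_i with i an active constraint
   ((G ubar - b)_i = 0), and such a cone is weak-* closed.  As G has finite
   rank, there are v_1, ..., v_k in L^infty whose images span G(L^infty).  A
   functional phi outside the cone either does not vanish at some v in ker G,
   and testing at v alone separates it from the cone, or it factors through G
   and is determined by the vector (phi v_j)_j.  That vector lies outside a
   finitely generated cone of R^k, which is closed by Caratheodory's reduction
   to linearly independent generators, so testing at the v_j separates phi. *)

From HB Require Import structures.
From mathcomp Require Import all_boot all_order all_algebra.
From mathcomp Require Import all_classical all_reals all_analysis.
From mathcomp Require Import lra zify.
Set Implicit Arguments. Unset Strict Implicit. Unset Printing Implicit Defensive.
Import Order.TTheory GRing.Theory Num.Theory.
Local Open Scope classical_set_scope.
Local Open Scope ring_scope.

Section FinitelyGeneratedCone.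
Variable R : realFieldType.

Definition away_from_cone n k (A : 'M[R]_(n, k)) (y : 'rV[R]_k) :=
  exists2 e, 0 < e & forall t : 'rV_n, (forall i, 0 <= t 0 i) ->
    exists j, e <= `|(t *m A - y) 0 j|.

Lemma away_from_cone_mulmx n k p (A : 'M[R]_(n, k)) y (B : 'M[R]_(k, p)) q e :
  0 < e -> (forall t : 'rV_n, (forall i, 0 <= t 0 i) ->
    e <= `|((t *m A - y) *m B) 0 q|) ->
  away_from_cone A y.
Proof.
move=> e0 Be; pose K := 1 + \sum_j `|B j q|.
have K0 : 0 < K by rewrite ltr_pwDl // sumr_ge0.
exists (e / K) => [|t t0]; first by rewrite divr_gt0.
apply: contrapT => /forallNP small; have := Be t t0; apply/negP; rewrite -ltNge.
rewrite mxE; apply: le_lt_trans (ler_norm_sum _ _ _) _.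
apply: (@le_lt_trans _ _ (e / K * \sum_j `|B j q|)).
  rewrite mulr_sumr; apply: ler_sum => j _; rewrite normrM ler_wpM2r //.
  by apply: ltW; rewrite ltNge; apply/negP/small.
by rewrite -ltr_pdivlMl ?divr_gt0 // invf_div divfK ?gt_eqF // ltrDr.
Qed.

Lemma row_free_away_from_cone n k (A : 'M[R]_(n, k)) y :
  row_free A -> (forall t : 'rV_n, (forall i, 0 <= t 0 i) -> t *m A != y) ->
  away_from_cone A y.
Proof.
move=> /row_freeP [B AB1] notin.
have [/submxP [D yDA] | y_out] := boolP (y <= A)%MS; last first.
  have [i yc_i] : exists i, (y *m cokermx A) 0 i != 0.
    by apply/rV0Pn; rewrite -submxE.
  apply: (@away_from_cone_mulmx _ _ _ _ _ (cokermx A) i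
            `|(y *m cokermx A) 0 i|); first by rewrite normr_gt0.
  move=> t _; rewrite mulmxBl -mulmxA mulmx_coker mulmx0 sub0r.
  by rewrite [in X in _ <= X]mxE normrN.
have [i Di_lt0] : exists i, D 0 i < 0.
  apply: contrapT => /forallNP D_ge0.
  suff D_nonneg i : 0 <= D 0 i by move: (notin D D_nonneg); rewrite yDA eqxx.
  by rewrite leNgt; apply/negP; exact: D_ge0.
apply: (@away_from_cone_mulmx _ _ _ _ _ B i (- D 0 i)).
  by rewrite oppr_gt0.
move=> t t0; rewrite yDA -mulmxBl -mulmxA AB1 mulmx1 !mxE.
by apply: le_trans (ler_norm _); rewrite lerBrDr addNr.
Qed.

Lemma nonneg_dependence n k (A : 'M[R]_(n, k)) :
  ~~ row_free A -> exists2 l : 'rV_n, l *m A = 0 & exists i, 0 < l 0 i.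
Proof.
rewrite -kermx_eq0 => /rowV0Pn [v /sub_kermxP vA0 /rV0Pn [i vi]].
exists (v 0 i *: v); first by rewrite -scalemxAl vA0 scaler0.
by exists i; rewrite mxE -expr2 exprn_even_gt0.
Qed.

Lemma mulmx_col'_row' n k (t : 'rV[R]_n.+1) (A : 'M[R]_(n.+1, k)) i0 :
  t 0 i0 = 0 -> t *m A = col' i0 t *m row' i0 A.
Proof.
move=> ti0; apply/rowP => j; rewrite !mxE (bigD1_ord i0) //= ti0 mul0r add0r.
by apply: eq_bigr => i _; rewrite !mxE.
Qed.

Lemma away_from_cone_of_notin n k (A : 'M[R]_(n, k)) y :
  (forall t : 'rV_n, (forall i, 0 <= t 0 i) -> t *m A != y) ->
  away_from_cone A y.
Proof.
elim: n A => [|n IH] A notin.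
  by apply: row_free_away_from_cone notin; rewrite /row_free -leqn0 rank_leq_row.
have [|/nonneg_dependence [l lA0 [ip lip]]] := boolP (row_free A).
  by move=> /row_free_away_from_cone; apply.
have away_row' i0 : away_from_cone (row' i0 A) y.
  apply: IH => t' t'0; apply: contraNN (notin (\row_i oapp (t' 0) 0 (unlift i0 i)) _).
    rewrite (@mulmx_col'_row' _ _ _ _ i0); last by rewrite mxE unlift_none.
    by move=> /eqP <-; apply/eqP; congr (_ *m _); apply/rowP => j; rewrite !mxE liftK.
  by move=> i; rewrite mxE; case: (unlift i0 i).
have [E /all_and2 [E0 hE]] := choice (fun i0 => (exists2P _ _).1 (away_row' i0)).
pose e := \big[Num.min/1]_i E i.
exists e => [|t t0]; first by apply: lt_bigmin => // i _; exact: E0.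
have [i1 li1 i1_min] := @arg_minP _ _ _ ip (fun i => 0 < l 0 i) (fun i => t 0 i / l 0 i) lip.
(* Move t along l until its coordinate i1 vanishes; t *m A then lies in the
   cone generated by the other rows. *)
pose t' := t - (t 0 i1 / l 0 i1) *: l.
have t'0 i : 0 <= t' 0 i.
  rewrite !mxE subr_ge0; have [li_gt0|li_le0] := ltrP 0 (l 0 i).
    by rewrite -ler_pdivlMr //; exact: i1_min.
  apply: le_trans (t0 i); apply: mulr_ge0_le0 => //.
  by rewrite divr_ge0 // ltW.
have t'i1 : t' 0 i1 = 0 by rewrite !mxE divfK ?gt_eqF // subrr.
have t'A : t' *m A = t *m A by rewrite mulmxBl -scalemxAl lA0 scaler0 subr0.
have [i|j hj] := hE i1 (col' i1 t'); first by rewrite mxE.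
exists j; rewrite -t'A (mulmx_col'_row' _ t'i1).
by apply: le_trans hj; exact: bigmin_le.
Qed.

End FinitelyGeneratedCone.

Section FiniteSpanningFamily.
Variables (F : fieldType) (V : Type) (P : V -> Prop) (m : nat) (g : V -> 'rV[F]_m).

Definition image_mx k (vs : 'I_k -> V) : 'M[F]_(k, m) := \matrix_j g (vs j).

Lemma image_mx_rank_extend k (vs : 'I_k -> V) v :
  ~~ (g v <= image_mx vs)%MS ->
  (\rank (image_mx vs) < \rank (image_mx (fun j => oapp vs v (unlift ord_max j))))%N.
Proof.
set vs' := fun j => _ => v_out.
have sub_vs' : (image_mx vs <= image_mx vs')%MS.
  apply/row_subP => j; rewrite rowK.
  have -> : g (vs j) = row (lift ord_max j) (image_mx vs') by rewrite rowK /vs' liftK.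
  exact: row_sub.
rewrite (ltn_leqif (mxrank_leqif_sup sub_vs')); apply: contra v_out => /(submx_trans _); apply.
have -> : g v = row ord_max (image_mx vs') by rewrite rowK /vs' unlift_none.
exact: row_sub.
Qed.

Lemma finite_spanning_family : exists k (vs : 'I_k -> V),
  (forall j, P (vs j)) /\ forall v, P v -> (g v <= image_mx vs)%MS.
Proof.
suff: forall N k (vs : 'I_k -> V), (forall j, P (vs j)) ->
    (m - \rank (image_mx vs) < N)%N ->
  exists k (vs : 'I_k -> V), (forall j, P (vs j)) /\ forall v, P v -> (g v <= image_mx vs)%MS.
  have vs0 : 'I_0 -> V by case.
  by move/(_ m.+1 0%N vs0); apply; [case | rewrite ltnS leq_subr].
elim=> [//|N IH] k vs Pvs rk_lt.
have [spans|] := pselect (forall v, P v -> (g v <= image_mx vs)%MS); first by exists k, vs.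
move=> /existsNP [v /not_implyP [Pv /negP v_out]].
apply: (IH k.+1 (fun j => oapp vs v (unlift ord_max j))).
  by move=> j; case: unlift.
have := image_mx_rank_extend v_out.
have := rank_leq_col (image_mx (fun j => oapp vs v (unlift (@ord_max k) j))).
lia.
Qed.

End FiniteSpanningFamily.

Section OrthantImage.
Variables (T : Type) (R : realType) (P : (T -> R) -> Prop).
Hypotheses (P0 : P (fun _ => 0))
  (Pcomb : forall a u v, P u -> P v -> P (fun x => a * u x + v x)).

Definition linear_on (F : (T -> R) -> R) :=
  forall a u v, P u -> P v -> F (fun x => a * u x + v x) = a * F u + F v.

Lemma linear_on0 F : linear_on F -> F (fun _ => 0) = 0.
Proof.
move=> /(_ (-1) _ _ P0 P0).
have -> : (fun x => -1 * (0 : R) + 0) = (fun _ : T => 0) by apply/funext => x; rewrite mulr0 addr0.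
by rewrite mulN1r addNr.
Qed.

Lemma P_sum (I : Type) (r : seq I) (beta : I -> R) (vs : I -> T -> R) :
  (forall j, P (vs j)) -> P (fun x => \sum_(j <- r) beta j * vs j x).
Proof.
move=> Pvs; elim: r => [|j r IH].
  by under [X in P X]funext do rewrite big_nil.
by under [X in P X]funext do rewrite big_cons; exact: Pcomb.
Qed.

Lemma linear_on_sum F (I : Type) (r : seq I) (beta : I -> R) (vs : I -> T -> R) :
  linear_on F -> (forall j, P (vs j)) ->
  F (fun x => \sum_(j <- r) beta j * vs j x) = \sum_(j <- r) beta j * F (vs j).
Proof.
move=> Flin Pvs; elim: r => [|j r IH].
  by under [X in F X]funext do rewrite big_nil; rewrite big_nil linear_on0.
under [X in F X]funext do rewrite big_cons.
by rewrite Flin ?IH ?big_cons //; exact: P_sum.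
Qed.

Variables (n : nat) (g : (T -> R) -> 'I_n -> R).
Hypothesis g_lin : forall i, linear_on (g^~ i).

Definition orthant_image : set ((T -> R) -> R) :=
  [set phi | exists2 t : 'I_n -> R, (forall i, 0 <= t i) &
                                    forall v, P v -> phi v = vdot t (g v)].

Lemma factors_through_span phi k (vs : 'I_k -> T -> R) (beta : 'I_k -> R) v :
  linear_on phi -> (forall v, P v -> (forall i, g v i = 0) -> phi v = 0) ->
  (forall j, P (vs j)) -> P v ->
  (forall i, g v i = \sum_j beta j * g (vs j) i) ->
  phi v = \sum_j beta j * phi (vs j).
Proof.
move=> phi_lin phi_ker Pvs Pv g_v.
pose s x := \sum_j beta j * vs j x.
have Ps : P s by exact: P_sum.
have g_diff i : g (fun x => -1 * s x + v x) i = 0.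
  by rewrite g_lin // (linear_on_sum _ _ (g_lin i) Pvs) g_v mulN1r addNr.
have := phi_ker _ (Pcomb (-1) Ps Pv) g_diff.
rewrite phi_lin // (linear_on_sum _ _ phi_lin Pvs) mulN1r => /eqP.
by rewrite addrC subr_eq0 => /eqP.
Qed.

Lemma orthant_image_weak_star_closed phi :
  linear_on phi -> ~ orthant_image phi ->
  exists (vs : seq (T -> R)) (e : R), [/\ 0 < e, forall v, v \in vs -> P v &
    forall psi, (forall v, v \in vs -> `|psi v - phi v| < e) -> ~ orthant_image psi].
Proof.
move=> phi_lin phi_out.
have [[v1 [Pv1 g_v1 phi_v1]] | phi_ker] :=
  pselect (exists v, [/\ P v, forall i, g v i = 0 & phi v != 0]).
  exists [:: v1], `|phi v1|; split; first by rewrite normr_gt0.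
    by move=> v; rewrite inE => /eqP ->.
  move=> psi near [t _ psi_t]; have := near v1 (mem_head _ _).
  rewrite psi_t // /vdot big1 ?sub0r ?normrN ?ltxx // => i _.
  by rewrite g_v1 mulr0.
have {}phi_ker v : P v -> (forall i, g v i = 0) -> phi v = 0.
  move=> Pv g_v; apply/eqP/negPn/negP => phi_v; apply: phi_ker; by exists v.
have [k [vs [Pvs spans]]] := finite_spanning_family P (fun v => \row_i g v i).
pose A : 'M[R]_(n, k) := \matrix_(i, j) g (vs j) i.
pose y : 'rV[R]_k := \row_j phi (vs j).
have tA (t : 'rV[R]_n) j : (t *m A) 0 j = vdot (fun i => t 0 i) (g (vs j)).
  by rewrite mxE; apply: eq_bigr => i _; rewrite mxE.
have notin (t : 'rV[R]_n) : (forall i, 0 <= t 0 i) -> t *m A != y.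
  move=> t0; apply/eqP => tAy; apply: phi_out; exists (fun i => t 0 i) => // v Pv.
  have /submxP [D g_vD] := spans v Pv.
  have g_v i : g v i = \sum_j D 0 j * g (vs j) i.
    have := congr1 (fun M : 'rV_n => M 0 i) g_vD; rewrite /= !mxE => ->.
    by apply: eq_bigr => j _; rewrite /image_mx !mxE.
  rewrite (factors_through_span phi_lin phi_ker Pvs Pv g_v).
  have phi_vs j : phi (vs j) = vdot (fun i => t 0 i) (g (vs j)) by rewrite -tA tAy mxE.
  under eq_bigr => j _ do rewrite phi_vs /vdot mulr_sumr.
  rewrite exchange_big /vdot; apply: eq_bigr => i _; rewrite g_v mulr_sumr.
  by apply: eq_bigr => j _; rewrite mulrCA.
have [e e0 away] := away_from_cone_of_notin notin.
exists [seq vs j | j <- enum 'I_k], e; split=> //; first by move=> v /mapP [j _ ->].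
move=> psi near [t t0 psi_t].
have tA_psi j : (\row_i t i *m A) 0 j = psi (vs j).
  by rewrite tA psi_t //; apply: eq_bigr => i _; rewrite mxE.
have [i|j] := away (\row_i t i); first by rewrite mxE.
rewrite mxE [(- y) 0 j]mxE [y 0 j]mxE tA_psi leNgt => /negP; apply; apply: near.
by apply: map_f; rewrite mem_enum.
Qed.

End OrthantImage.

Section PolarCone.
Variables (R : realType) (m : nat).

Lemma vdot_cone (w : 'I_m -> R) n (t : 'I_n -> R) (a : 'I_n -> 'I_m -> R) :
  vdot w (fun i => \sum_k t k * a k i) = \sum_k t k * vdot w (a k).
Proof.
rewrite /vdot; under eq_bigr do rewrite mulr_sumr.
rewrite exchange_big; apply: eq_bigr => k _; rewrite mulr_sumr.
by apply: eq_bigr => i _; rewrite mulrCA.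
Qed.

Variables (c : 'I_m -> R).
Hypothesis c_le0 : forall i, c i <= 0.

Lemma polar_cone_nonpos_minus : polar (cone (nonpos_minus c)) =
  [set w | (forall i, 0 <= w i) /\ forall i, c i != 0 -> w i = 0].
Proof.
apply/seteqP; split => w; last first.
  move=> [w_ge0 w_act] z [n [t [a [t_ge0 a_in ->]]]].
  rewrite vdot_cone; apply: sumr_le0 => k _; apply: mulr_ge0_le0 (t_ge0 k) _.
  have [v v_le0 ->] := a_in k; apply: sumr_le0 => i _.
  have [ci0|ci] := eqVneq (c i) 0; first by rewrite ci0 subr0 mulr_ge0_le0.
  by rewrite w_act // mul0r.
move=> w_polar.
have scaled_coord_ge0 i s : c i <= s -> 0 <= s * w i.
  move=> ci_s; pose v j := c j - (j == i)%:R * s.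
  have : cone (nonpos_minus c) (fun j => v j - c j).
    exists 1%N, (fun _ => 1), (fun _ j => v j - c j); split => //.
      move=> _; exists v => // j; rewrite /v.
      by case: eqP => [->|_]; rewrite /= ?mul1r ?mul0r subr_le0 ?c_le0.
    by apply/funext => j; rewrite big_ord1 mul1r.
  move=> /w_polar; rewrite /vdot (bigD1 i) //= big1 => [|j /negbTE ji].
    by rewrite /v eqxx mul1r addrAC subrr sub0r mulrN addr0 oppr_le0 mulrC.
  by rewrite /v ji mul0r subr0 subrr mulr0.
have w_ge0 i : 0 <= w i.
  by have := scaled_coord_ge0 i 1 (le_trans (c_le0 i) ler01); rewrite mul1r.
split=> // i ci; have ci_lt0 : c i < 0 by rewrite lt_neqAle ci c_le0.
have := scaled_coord_ge0 i (c i) (lexx _); rewrite nmulr_rge0 // => w_le0.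
by apply/eqP; rewrite eq_le w_le0 w_ge0.
Qed.

Definition active_part (z : 'I_m -> R) i := if c i == 0 then z i else 0.

Lemma vdot_active_part t z : vdot (active_part t) z = vdot t (active_part z).
Proof.
by apply: eq_bigr => i _; rewrite /active_part; case: ifP; rewrite ?mul0r ?mulr0.
Qed.

End PolarCone.

Section EssentiallyBounded.
Context {dT : measure_display} {T : measurableType dT} {R : realType}.
Variables (mu : {measure set T -> \bar R}) (L : set T).
Hypothesis mL : measurable L.

Lemma Linf0 : Linf mu L (fun _ => 0).
Proof.
split; first exact: measurable_cst.
by exists 0; apply: aeW => x _; rewrite normr0.
Qed.

Lemma Linf_comb a u v :
  Linf mu L u -> Linf mu L v -> Linf mu L (fun x => a * u x + v x).
Proof.
move=> [mu_ [Cu u_le]] [mv [Cv v_le]]; split.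
  apply: measurable_realfun.measurable_funD => //.
  by apply: measurable_realfun.measurable_funM => //; exact: measurable_cst.
exists (`|a| * Cu + Cv); move: u_le v_le; apply: filterS2 => x u_le v_le Lx.
apply: le_trans (ler_normD _ _) _; rewrite normrM.
by apply: lerD; [apply: ler_wpM2l; last exact: u_le | exact: v_le].
Qed.

Lemma Linf_dual_eq phi psi : (forall v, Linf mu L v -> phi v = psi v) ->
  Linf_dual mu L psi -> Linf_dual mu L phi.
Proof.
move=> phi_psi [psi_ae psi_lin [C psi_le]]; split.
- by move=> u v Lu Lv uv; rewrite !phi_psi //; exact: psi_ae.
- by move=> a u v Lu Lv; rewrite !phi_psi ?psi_lin //; exact: Linf_comb.
by exists C => u M Lu u_le; rewrite phi_psi //; exact: psi_le.
Qed.

Lemma ess_bounded_by_lt0 u M : M < 0 -> ess_bounded_by mu L u M -> mu L = 0%E.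
Proof.
move=> M_lt0 u_le; apply/negligibleP => //; apply: negligibleS u_le => x Lx.
by move=> /(_ Lx); have := normr_ge0 (u x); lra.
Qed.

Lemma integral_sq_le u M : measurable_fun L u -> ess_bounded_by mu L u M ->
  (\int[mu]_(x in L) ((u x) ^+ 2)%:E <= (M ^+ 2)%:E * mu L)%E.
Proof.
move=> mu_ u_le; rewrite -integral_cst //; apply: ae_ge0_le_integral => //.
- by move=> x _; rewrite lee_fin sqr_ge0.
- by apply/measurable_realfun.measurable_EFinP; exact: measurable_realfun.measurable_funX.
- by move=> x _; rewrite lee_fin sqr_ge0.
move: u_le; apply: filterS => x u_le Lx; rewrite lee_fin.
by have := u_le Lx; rewrite ler_norml => /andP [? ?]; nra.
Qed.

Hypothesis finL : (mu L < +oo)%E.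

Lemma measure_finE : mu L = (fine (mu L))%:E.
Proof. by rewrite fineK // ge0_fin_numE ?measure_ge0. Qed.

Lemma Linf_L2 u : Linf mu L u -> L2 mu L u.
Proof.
move=> [mu_ [C u_le]]; split => //; apply: le_lt_trans (integral_sq_le mu_ u_le) _.
by rewrite measure_finE -EFinM ltry.
Qed.

(* No sign condition on M: for M < 0 the hypothesis forces mu L = 0. *)
Lemma L2norm_le u M : measurable_fun L u -> ess_bounded_by mu L u M ->
  L2norm mu L u <= M * Num.sqrt (fine (mu L)).
Proof.
move=> mu_ u_le; have := integral_sq_le mu_ u_le.
have : (0 <= \int[mu]_(x in L) ((u x) ^+ 2)%:E)%E.
  by apply: integral_ge0 => x _; rewrite lee_fin sqr_ge0.
rewrite /L2norm measure_finE -EFinM; set I := (\int[mu]_(x in L) _)%E => I_ge0 I_le.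
have {I_le} : fine I <= M ^+ 2 * fine (mu L).
  by rewrite -lee_fin fineK // ge0_fin_numE //; exact: le_lt_trans I_le (ltry _).
have [M_ge0 | M_lt0] := leP 0 M.
  move=> I_le; rewrite -[M]ger0_norm // -sqrtr_sqr -sqrtrM ?sqr_ge0 //= ler_sqrt //.
  by rewrite mulr_ge0 ?sqr_ge0 // fine_ge0 ?measure_ge0.
rewrite (ess_bounded_by_lt0 M_lt0 u_le) /= mulr0 sqrtr0 mulr0 => I_le0.
by rewrite (eqP (_ : Num.sqrt (fine I) == 0)) // sqrtr_eq0.
Qed.

Section BoundedOperator.
Variables (m : nat) (G : (T -> R) -> 'I_m -> R) (C : R).
Hypotheses (G_lin : forall (a : R) u v, L2 mu L u -> L2 mu L v ->
                      G (fun x => a * u x + v x) = fun i => a * G u i + G v i)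
  (G_bnd : forall u, L2 mu L u -> forall i, `|G u i| <= C * L2norm mu L u).

Lemma G_Linf_comb i a u v : Linf mu L u -> Linf mu L v ->
  G (fun x => a * u x + v x) i = a * G u i + G v i.
Proof. by move=> Lu Lv; rewrite G_lin //; exact: Linf_L2. Qed.

Lemma G_active_part_linear_on c i :
  linear_on (Linf mu L) (fun v => active_part c (G v) i).
Proof.
move=> a u v Lu Lv; rewrite /active_part; case: ifP => _; first exact: G_Linf_comb.
by rewrite mulr0 addr0.
Qed.

Lemma G_Linf_bound u M i : Linf mu L u -> ess_bounded_by mu L u M ->
  `|G u i| <= `|C| * Num.sqrt (fine (mu L)) * M.
Proof.
move=> Lu u_le; apply: le_trans (G_bnd (Linf_L2 Lu) i) _.
apply: le_trans (ler_wpM2r (sqrtr_ge0 _) (ler_norm C)) _.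
by rewrite -mulrA [_ * M]mulrC ler_wpM2l //; exact: L2norm_le Lu.1 u_le.
Qed.

Lemma G_ae_eq u v : Linf mu L u -> Linf mu L v -> ae_eq mu L u v -> G u = G v.
Proof.
move=> Lu Lv uv; apply/funext => i; apply/eqP; rewrite -subr_eq0 addrC.
have vu_le : ess_bounded_by mu L (fun x => -1 * v x + u x) 0.
  by move: uv; apply: filterS => x uv Lx; rewrite (uv Lx) mulN1r addNr normr0.
have := G_Linf_bound i (Linf_comb _ Lv Lu) vu_le.
by rewrite mulr0 normr_le0 G_Linf_comb // mulN1r.
Qed.

Lemma Gstar_Linf_dual w : Linf_dual mu L (Gstar G w).
Proof.
split.
- by move=> u v Lu Lv uv; rewrite /Gstar (G_ae_eq Lu Lv uv).
- move=> a u v Lu Lv; rewrite /Gstar /vdot mulr_sumr -big_split.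
  by apply: eq_bigr => i _; rewrite G_Linf_comb // mulrDr mulrCA.
exists ((\sum_i `|w i|) * (`|C| * Num.sqrt (fine (mu L)))) => u M Lu u_le.
rewrite /Gstar /vdot -mulrA mulr_suml; apply: le_trans (ler_norm_sum _ _ _) _.
apply: ler_sum => i _; rewrite normrM ler_wpM2l //.
exact: G_Linf_bound.
Qed.

End BoundedOperator.

Lemma Gstar_image_polar_cone m (G : (T -> R) -> 'I_m -> R) (c : 'I_m -> R) :
  (forall i, c i <= 0) ->
  Gstar_image mu L G (polar (cone (nonpos_minus c))) =
  orthant_image (Linf mu L) (fun v => active_part c (G v)).
Proof.
move=> c_le0; rewrite polar_cone_nonpos_minus //; apply/seteqP; split => phi.
  move=> [w [w_ge0 w_act] phi_w]; exists w => // v Lv.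
  rewrite phi_w // /Gstar -vdot_active_part; congr vdot; apply/funext => i.
  by rewrite /active_part; case: eqP => // /eqP /w_act.
move=> [t t_ge0 phi_t]; exists (active_part c t).
  by split=> i; rewrite /active_part; case: eqP.
by move=> v Lv; rewrite phi_t // /Gstar vdot_active_part.
Qed.

End EssentiallyBounded.

Theorem lemmaA1 (dT : measure_display) (T : measurableType dT) (R : realType)
  (mu : {measure set T -> \bar R}) (L : set T)
  (mL : measurable L) (finL : (mu L < +oo)%E)
  (m : nat) (f : (T -> R) -> R) (G : (T -> R) -> 'I_m -> R) (b : 'I_m -> R)
  (ua ub uhat ubar : T -> R) (delta rho : R)
  (* f : L^2 -> R, well defined on classes and continuously Frechet differentiable *)
  (f_ae : forall u v, L2 mu L u -> L2 mu L v -> ae_eq mu L u v -> f u = f v)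
  (f_C1 : C1_L2 mu L f)
  (* G : L^2 -> R^m linear and bounded *)
  (G_lin : forall (a : R) u v, L2 mu L u -> L2 mu L v ->
     G (fun x => a * u x + v x) = fun i => a * G u i + G v i)
  (G_bnd : exists C : R, forall u, L2 mu L u -> forall i, `|G u i| <= C * L2norm mu L u)
  (* box bounds *)
  (ua_inf : Linf mu L ua) (ub_inf : Linf mu L ub)
  (delta_pos : 0 < delta)
  (ua_ub : {ae mu, forall x, L x -> ua x + delta <= ub x})
  (* Slater point *)
  (uhat_inf : Linf mu L uhat) (Guhat : forall i, G uhat i <= b i)
  (rho_pos : 0 < rho)
  (uhat_box : {ae mu, forall x, L x -> ua x + rho <= uhat x /\ uhat x <= ub x - rho})
  (* ubar is a locally optimal solution *)
  (ubar_inf : Linf mu L ubar)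
  (ubar_box : {ae mu, forall x, L x -> ua x <= ubar x /\ ubar x <= ub x})
  (Gubar : forall i, G ubar i <= b i)
  (ubar_loc : exists2 eps : R, 0 < eps & forall u, L2 mu L u ->
     {ae mu, forall x, L x -> ua x <= u x /\ u x <= ub x} ->
     (forall i, G u i <= b i) ->
     (exists2 r : R, r < eps & ess_bounded_by mu L (fun x => u x - ubar x) r) ->
     f ubar <= f u) :
  let S := Gstar_image mu L G
             (polar (cone (nonpos_minus (fun i => G ubar i - b i)))) in
  (forall phi, S phi -> Linf_dual mu L phi) /\ weak_star_closed mu L S.
Proof.
move=> S; have [C G_le] := G_bnd.
have c_le0 i : G ubar i - b i <= 0 by rewrite subr_le0.
split.
  move=> phi [w _ phi_w]; apply: Linf_dual_eq phi_w _.
  exact: (Gstar_Linf_dual mL finL G_lin G_le).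
move=> phi [_ phi_lin _]; rewrite /S Gstar_image_polar_cone // => phi_out.
have [vs [e [e0 Lvs near]]] := orthant_image_weak_star_closed (Linf0 mu L)
  (@Linf_comb _ _ _ mu L) (G_active_part_linear_on mL finL G_lin _) phi_lin phi_out.
by exists vs, e; split=> //; split=> // psi _; exact: near.
Qed.
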